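(* Let $G_{n\times n}$ denote the $n\times n$ square grid graph and $\pi_{\mathrm{opt}}(G_{n\times n})$ its optimal pebbling number. Then the limit $$\lim_{n\to\infty}\frac{n^2}{\pi_{\mathrm{opt}}(G_{n\times n})}$$ exists.
   Context: A pebble distribution on a graph $G$ is a function $D:V(G)\to\mathbb{N}$; its size is $|D|=\sum_v D(v)$. A pebbling move along an edge $vu$ with $D(v)\ge 2$ removes two pebbles from $v$ and adds one pebble to $u$. A vertex $v$ is reachable under $D$ if $D(v)\ge 1$ or there is a sequence of pebbling moves whose last move places a pebble on $v$. $D$ is solvable if every vertex is reachable. The optimal pebbling number $\pi_{\mathrm{opt}}(G)$ is the minimum size of a solvable distribution on $G$. The $n\times n$ grid $G_{n\times n}$ is the Cartesian product of two paths on $n$ vertices. *)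

From mathcomp Require Import all_boot.
From Stdlib Require Import Classical ClassicalEpsilon.

Set Implicit Arguments.
Unset Strict Implicit.
Unset Printing Implicit Defensive.

Definition gvert (n : nat) : finType := ('I_n * 'I_n)%type.

Definition path_adj (a b : nat) : bool := (b == a.+1) || (a == b.+1).

Definition grid_adj (n : nat) (u v : gvert n) : bool :=
  ((u.1 == v.1) && path_adj u.2 v.2) || ((u.2 == v.2) && path_adj u.1 v.1).

Definition distr (n : nat) := gvert n -> nat.
Definition dsize (n : nat) (D : distr n) : nat := \sum_(v : gvert n) D v.

Definition move_result (n : nat) (D : distr n) (v u : gvert n) : distr n :=
  fun w => if w == v then D w - 2 else if w == u then (D w).+1 else D w.

Inductive moves_to (n : nat) : distr n -> distr n -> Prop :=
| moves_refl D : moves_to D D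
| moves_step D D' v u :
    grid_adj v u -> 2 <= D v -> moves_to (move_result D v u) D' -> moves_to D D'.

(* v is reachable under D: D v >= 1, or there is a sequence of pebbling moves
   whose last move (along an edge w v, legal in the configuration D1 reached
   before it) places a pebble on v. *)
Definition reachable (n : nat) (D : distr n) (v : gvert n) : Prop :=
  0 < D v \/
  exists (D1 : distr n) (w : gvert n), moves_to D D1 /\ grid_adj w v /\ 2 <= D1 w.

Definition solvable (n : nat) (D : distr n) : Prop :=
  forall v : gvert n, reachable D v.

Definition solvable_size (n : nat) : pred nat :=
  fun k => if excluded_middle_informative
                (exists D : distr n, solvable D /\ dsize D = k)
           then true else false.

Lemma solvable_size_ex (n : nat) : exists k, solvable_size n k.
Proof.
exists (dsize (fun _ : gvert n => 1)).
rewrite /solvable_size; case: excluded_middle_informative => // H; exfalso.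
apply: H; exists (fun _ => 1); split => // v; by left.
Qed.

Definition pi_opt (n : nat) : nat := ex_minn (solvable_size_ex n).

(* Write b(n) = n^2 / pi_opt(n).  Copies of an optimal distribution of the
   n-grid, placed on ceil(m/n)^2 overlapping n x n squares covering the
   m-grid, give pi_opt(m) <= (m/n + 1)^2 pi_opt(n), hence
   b(m) >= b(n) - 27 n/m.  Conversely, the potential
   sum_u D(u) 2^(-d(t,u)) of a target t never grows under a pebbling move and
   is at least 1 when t is reachable; summing it over all targets t, each
   pebble contributes at most 9, so b(n) <= 9.  A bounded sequence that can
   only drop by O(n/m) from n to m converges to its supremum. *)

From mathcomp Require Import all_boot zify.
From Stdlib Require Import FunctionalExtensionality ClassicalEpsilon.

Set Implicit Arguments.
Unset Strict Implicit.
Unset Printing Implicit Defensive.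

Lemma pi_opt_le n (D : distr n) : solvable D -> pi_opt n <= dsize D.
Proof.
move=> solD; rewrite /pi_opt; case: ex_minnP => k _; apply.
rewrite /solvable_size; case: excluded_middle_informative => // [[]].
by exists D.
Qed.

Lemma pi_opt_attained n : exists D : distr n, solvable D /\ dsize D = pi_opt n.
Proof.
by rewrite /pi_opt; case: ex_minnP => k + _; rewrite /solvable_size;
  case: excluded_middle_informative.
Qed.

Lemma leq_bigsum (I : finType) (F : I -> nat) x : F x <= \sum_y F y.
Proof. by rewrite (bigD1 x) //= leq_addr. Qed.

Lemma grid_adj_neq n (v u : gvert n) : grid_adj v u -> v != u.
Proof. by apply: contraTN => /eqP ->; rewrite /grid_adj /path_adj !eqxx /=; lia. Qed.

Lemma moves_to_mono n (D D1 E : distr n) : moves_to D D1 ->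
  (forall w, D w <= E w) -> exists E1, moves_to E E1 /\ forall w, D1 w <= E1 w.
Proof.
move=> mv; elim: mv E => {D D1} [D|D D' v u adj_vu D2v _ IH] E leDE.
  by exists E; split => //; apply: moves_refl.
have le_moved w : move_result D v u w <= move_result E v u w.
  by rewrite /move_result; have := leDE w; case: (w == v); case: (w == u); lia.
have [E1 [mvE le1]] := IH _ le_moved.
exists E1; split => //; apply: moves_step mvE => //.
exact: leq_trans D2v (leDE v).
Qed.

Lemma reachable_mono n (D E : distr n) v : (forall w, D w <= E w) ->
  reachable D v -> reachable E v.
Proof.
move=> leDE [Dv|[D1 [w [mv [adj D1w]]]]]; first by left; apply: leq_trans Dv (leDE v).
have [E1 [mvE le1]] := moves_to_mono mv leDE.
by right; exists E1, w; do 2?split => //; apply: leq_trans D1w (le1 w).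
Qed.

Section GridShift.

Variables (n m i j : nat) (fit_i : i + n <= m) (fit_j : j + n <= m).

Lemma shift_lt k (fit_k : k + n <= m) (x : 'I_n) : x + k < m.
Proof. by apply: leq_trans fit_k; rewrite addnC ltn_add2l. Qed.

Definition shift (v : gvert n) : gvert m :=
  (Ordinal (shift_lt fit_i v.1), Ordinal (shift_lt fit_j v.2)).

Lemma shift_inj : injective shift.
Proof.
move=> [a b] [c d] [] /eqP; rewrite eqn_add2r => /eqP ac /eqP.
by rewrite eqn_add2r => /eqP bd; congr pair; apply: val_inj.
Qed.

Lemma grid_adj_shift v u : grid_adj v u -> grid_adj (shift v) (shift u).
Proof.
by rewrite /grid_adj /path_adj -!val_eqE /= !eqn_add2r -!addSn !eqn_add2r.
Qed.

Definition shift_distr (D : distr n) : distr m :=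
  fun w => \sum_(v | shift v == w) D v.

Lemma shift_distr_shift D v : shift_distr D (shift v) = D v.
Proof. by rewrite /shift_distr (big_pred1 v) // => x; rewrite /= (inj_eq shift_inj). Qed.

Lemma shift_distr_move D v u : v != u ->
  shift_distr (move_result D v u) = move_result (shift_distr D) (shift v) (shift u).
Proof.
move=> neq_vu; apply: functional_extensionality => w.
case: (pickP (fun x => shift x == w)) => [x /eqP <-|off].
  by rewrite !shift_distr_shift /move_result !(inj_eq shift_inj) !shift_distr_shift.
rewrite /move_result ![w == shift _]eq_sym !off.
by rewrite /shift_distr !big_pred0.
Qed.

Lemma moves_to_shift D D1 : moves_to D D1 -> moves_to (shift_distr D) (shift_distr D1).
Proof.
elim=> {D D1} [D|D D' v u adj_vu D2v _ IH]; first exact: moves_refl.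
apply: (moves_step (grid_adj_shift adj_vu)); first by rewrite shift_distr_shift.
by rewrite -shift_distr_move ?grid_adj_neq.
Qed.

Lemma reachable_shift D t : reachable D t -> reachable (shift_distr D) (shift t).
Proof.
move=> [Dt|[D1 [w [mv [adj D1w]]]]]; first by left; rewrite shift_distr_shift.
right; exists (shift_distr D1), (shift w).
by rewrite shift_distr_shift; split; [exact: moves_to_shift | split; first exact: grid_adj_shift].
Qed.

Lemma dsize_shift_distr D : dsize (shift_distr D) = dsize D.
Proof.
rewrite /dsize /shift_distr; under eq_bigr do rewrite big_mkcond.
rewrite exchange_big /=; apply: eq_bigr => v _.
by rewrite -big_mkcond /=; under eq_bigl do rewrite eq_sym; rewrite big_pred1_eq.
Qed.

End GridShift.

(* Left ends of the [(m %/ n).+1] windows of length [n] covering [0, m);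
   the last ones are clamped to [m - n], so windows may overlap. *)
Definition window (n m a : nat) : nat := minn (a * n) (m - n).

Lemma window_fit n m a : n <= m -> window n m a + n <= m.
Proof. by rewrite /window; have := geq_minr (a * n) (m - n); lia. Qed.

Lemma window_cover n m (x : 'I_m) : 0 < n -> n <= m ->
  exists a : 'I_(m %/ n).+1, window n m a <= x < window n m a + n.
Proof.
move=> n_gt0 le_nm.
have a_lt : x %/ n < (m %/ n).+1 by rewrite ltnS leq_div2r // ltnW.
exists (Ordinal a_lt); rewrite /window /=.
have := leq_divM x n; have := ltn_ceil x n_gt0; have := ltn_ord x; nia.
Qed.

Lemma pi_opt_tile n m : 0 < n -> n <= m ->
  pi_opt m <= (m %/ n).+1 * (m %/ n).+1 * pi_opt n.
Proof.
move=> n_gt0 le_nm; set k := (m %/ n).+1.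
have fit a := window_fit a le_nm.
have [D [solD sizeD]] := pi_opt_attained n.
pose E : distr m := fun w =>
  \sum_(a < k) \sum_(b < k) shift_distr (fit a) (fit b) D w.
have solE : solvable E.
  move=> w; have [a /andP[a1 a2]] := window_cover w.1 n_gt0 le_nm.
  have [b /andP[b1 b2]] := window_cover w.2 n_gt0 le_nm.
  have x_lt : w.1 - window n m a < n by lia.
  have y_lt : w.2 - window n m b < n by lia.
  have <- : shift (fit a) (fit b) (Ordinal x_lt, Ordinal y_lt) = w.
    by case: w a1 a2 b1 b2 x_lt y_lt => ? ? /= *; congr pair; apply: val_inj; rewrite /= subnK.
  apply: (reachable_mono _ (reachable_shift (fit a) (fit b) (solD _))) => w'.
  apply: leq_trans (leq_bigsum (fun a : 'I_k => \sum_(b < k) _) a).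
  exact: (leq_bigsum (fun b : 'I_k => shift_distr (fit a) (fit b) D w') b).
apply: leq_trans (pi_opt_le solE) _.
rewrite /dsize /E exchange_big /=; under eq_bigr do rewrite exchange_big /=.
under eq_bigr do under eq_bigr do rewrite -/(dsize _) dsize_shift_distr sizeD.
rewrite !big_const_ord !iter_addn_0; lia.
Qed.

Definition path_dist (a b : nat) : nat := (a - b) + (b - a).

Lemma path_distC a b : path_dist a b = path_dist b a.
Proof. by rewrite /path_dist addnC. Qed.

Lemma expn2_pred e f : e = f.+1 -> 2 ^ e = 2 * 2 ^ f.
Proof. by move=> ->; rewrite expnS. Qed.

Section LineWeight.

Variables (n a : nat) (a_lt : a < n).

Let partial_sum k := \sum_(0 <= x < k) 2 ^ (n - path_dist a x).

Lemma partial_sum_left k : k <= a -> partial_sum k <= 2 ^ (n - (a - k)).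
Proof.
elim: k => [|k IH] le_ka; first by rewrite /partial_sum big_geq.
rewrite /partial_sum big_nat_recr //= -/(partial_sum k).
have := IH (ltnW le_ka).
have -> : 2 ^ (n - (a - k.+1)) = 2 * 2 ^ (n - (a - k)) by apply: expn2_pred; lia.
have -> : path_dist a k = a - k by rewrite /path_dist; lia.
lia.
Qed.

(* The second summand bounds the terms [x >= k] still to be added. *)
Lemma partial_sum_right k : a < k -> k <= n ->
  partial_sum k + 2 ^ (n - (k - 1 - a)) <= 3 * 2 ^ n.
Proof.
elim: k => [|k IH] // lt_ak le_kn.
rewrite /partial_sum big_nat_recr //= -/(partial_sum k).
have [->|neq_ka] := eqVneq k a.
  have := partial_sum_left (leqnn a).
  rewrite /path_dist !subnn subn0 (_ : a.+1 - 1 - a = 0) ?subn0; lia.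
have lt_a_k : a < k by rewrite ltn_neqAle eq_sym neq_ka -ltnS.
have := IH lt_a_k (ltnW le_kn).
have -> : 2 ^ (n - (k - 1 - a)) = 2 * 2 ^ (n - (k.+1 - 1 - a)) by apply: expn2_pred; lia.
have -> : path_dist a k = k.+1 - 1 - a by rewrite /path_dist; lia.
lia.
Qed.

Lemma sum_line_weight : \sum_(x < n) 2 ^ (n - path_dist a x) <= 3 * 2 ^ n.
Proof.
rewrite -(big_mkord xpredT (fun x => 2 ^ (n - path_dist a x))).
by have := partial_sum_right a_lt (leqnn n); rewrite -/(partial_sum n); lia.
Qed.

End LineWeight.

Section Potential.

Variable n : nat.

(* [4^n * 2^-d(t,u)] for the grid distance [d], scaled to stay in [nat]. *)
Definition weight (t u : gvert n) : nat :=
  2 ^ (n - path_dist t.1 u.1) * 2 ^ (n - path_dist t.2 u.2).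

Definition potential (t : gvert n) (D : distr n) : nat := \sum_u D u * weight t u.

Lemma weight_self t : weight t t = 2 ^ n * 2 ^ n.
Proof. by rewrite /weight /path_dist !subnn subn0. Qed.

Lemma weight_adj t v u : grid_adj v u -> weight t u <= 2 * weight t v.
Proof.
rewrite /grid_adj /path_adj /weight => /orP[] /andP[/eqP -> /orP adj].
  rewrite mulnCA leq_pmul2l ?expn_gt0 // -expnS leq_pexp2l //.
  by rewrite /path_dist; case: adj => /eqP; lia.
rewrite mulnA [2 * _]mulnC leq_pmul2r ?expn_gt0 // mulnC -expnS leq_pexp2l //.
by rewrite /path_dist; case: adj => /eqP; lia.
Qed.

Lemma sum_weight u : \sum_t weight t u <= 9 * (2 ^ n * 2 ^ n).
Proof.
rewrite /weight -(pair_bigA _ (fun i j : 'I_n =>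
  2 ^ (n - path_dist i u.1) * 2 ^ (n - path_dist j u.2))) /= -big_distrlr /=.
have -> : 9 * (2 ^ n * 2 ^ n) = 3 * 2 ^ n * (3 * 2 ^ n) by lia.
by apply: leq_mul; under eq_bigr do rewrite path_distC; apply: sum_line_weight.
Qed.

Lemma potential_move t D v u : 2 <= D v -> grid_adj v u ->
  potential t (move_result D v u) <= potential t D.
Proof.
move=> D2v adj; have neq_vu := grid_adj_neq adj.
have balance : potential t (move_result D v u) + 2 * weight t v =
               potential t D + weight t u.
  rewrite -[2 * weight t v](@big_pred1_eq _ 0 addn _ v (fun x => 2 * weight t x)).
  rewrite -[weight t u](@big_pred1_eq _ 0 addn _ u (weight t)).
  rewrite big_mkcond [\sum_(j | j == u) _]big_mkcond /=.
  rewrite /potential -!big_split /=; apply: eq_bigr => x _.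
  rewrite /move_result; have [->|_] := eqVneq x v; first by rewrite (negbTE neq_vu); nia.
  by case: eqVneq => [->|_] /=; nia.
by have := weight_adj t adj; lia.
Qed.

Lemma potential_moves_to t D D1 : moves_to D D1 -> potential t D1 <= potential t D.
Proof.
elim=> {D D1} [D|D D' v u adj D2v _ IH] //.
exact: leq_trans IH (potential_move t D2v adj).
Qed.

Lemma potential_reachable D t : reachable D t -> 2 ^ n * 2 ^ n <= potential t D.
Proof.
move=> [Dt|[D1 [w [mv [adj D1w]]]]].
  apply: leq_trans (leq_bigsum (fun u => D u * weight t u) t).
  by rewrite weight_self leq_pmull.
apply: leq_trans (potential_moves_to t mv).
apply: leq_trans (leq_bigsum (fun u => D1 u * weight t u) w).
rewrite -(weight_self t); apply: leq_trans (weight_adj t adj) _.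
by rewrite leq_mul2r D1w orbT.
Qed.

End Potential.

Lemma grid_size_le_pi_opt n : n * n <= 9 * pi_opt n.
Proof.
have [D [solD sizeD]] := pi_opt_attained n.
rewrite -(@leq_pmul2r (2 ^ n * 2 ^ n)) ?muln_gt0 ?expn_gt0 //.
have -> : n * n * (2 ^ n * 2 ^ n) = \sum_(t : gvert n) 2 ^ n * 2 ^ n.
  by rewrite sum_nat_const card_prod card_ord.
apply: (@leq_trans (\sum_t potential t D)).
  by apply: leq_sum => t _; apply: potential_reachable.
rewrite /potential exchange_big /=; under eq_bigr do rewrite -big_distrr /=.
apply: (@leq_trans (\sum_u D u * (9 * (2 ^ n * 2 ^ n)))).
  by apply: leq_sum => u _; rewrite leq_mul2l sum_weight orbT.
by rewrite -big_distrl /= -/(dsize D) sizeD mulnA [pi_opt n * 9]mulnC.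
Qed.

(* [b(n) - 27 n/m <= b(m)] with denominators cleared. *)
Lemma pi_opt_drift n m : 0 < n -> n <= m ->
  n * n * m * pi_opt m <= m * m * m * pi_opt n + 27 * n * pi_opt n * pi_opt m.
Proof.
move=> n_gt0 le_nm.
have tile := pi_opt_tile n_gt0 le_nm; have lower := grid_size_le_pi_opt m.
set k := (m %/ n).+1 in tile; set P := pi_opt n in tile *; set Q := pi_opt m in tile lower *.
have kn_le : k * n <= m + n by rewrite /k mulSn addnC leq_add2r leq_divM.
have : n * n * m * Q <= m * (k * n * (k * n)) * P.
  by apply: leq_trans (_ : n * n * m * (k * k * P) <= _); [rewrite leq_mul2l tile orbT | nia].
have : m * (k * n * (k * n)) * P <= m * ((m + n) * (m + n)) * P.
  by rewrite leq_mul2r leq_mul2l leq_mul ?orbT.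
have : n * n <= m * n by rewrite leq_mul2r le_nm orbT.
nia.
Qed.

From Stdlib Require Import Classical Reals Lra.
Open Scope R_scope.

Lemma Un_cv_of_bounded_almost_increasing (u : nat -> R) (M C : R) : 0 <= C ->
  (forall n, (0 < n)%nat -> u n <= M) ->
  (forall n m, (0 < n)%nat -> (n <= m)%nat -> u n - C * INR n / INR m <= u m) ->
  exists l, Un_cv u l.
Proof.
move=> C_ge0 le_M drift.
pose values x := exists n, (0 < n)%nat /\ x = u n.
have [S [S_ub S_least]] : {S | is_lub values S}.
  by apply: completeness; [exists M => _ [n [n_gt0 ->]]; apply: le_M | exists (u 1%nat), 1%nat].
exists S => eps eps_gt0.
have [n [n_gt0 near_S]] : exists n, (0 < n)%nat /\ S - eps / 2 < u n.
  apply: NNPP => far; suff : S <= S - eps / 2 by lra.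
  apply: S_least => _ [n [n_gt0 ->]]; apply: Rnot_lt_le => lt; apply: far; by exists n.
have [N N_gt] := INR_unbounded (2 * C * INR n / eps).
exists (N + n)%nat => m le_m.
have le_nm : (n <= m)%nat by apply/leP; lia.
have N_le : INR N <= INR m by apply: le_INR; lia.
have m_gt0 : (0 < m)%nat by apply: leq_trans le_nm.
have m_pos : 0 < INR m by apply/lt_0_INR/ltP.
have small : C * INR n / INR m <= eps / 2.
  have : 2 * C * INR n < eps * INR m.
    have := Rmult_lt_compat_r eps _ _ eps_gt0 (Rlt_le_trans _ _ _ N_gt N_le).
    by rewrite /Rdiv Rmult_assoc Rinv_l; lra.
  move=> lt; apply: (Rmult_le_reg_r (INR m)) => //.
  by rewrite /Rdiv Rmult_assoc Rinv_l; lra.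
have := drift n m n_gt0 le_nm; have : u m <= S by apply: S_ub; exists m.
by rewrite /R_dist => *; apply: Rabs_def1; lra.
Qed.

Definition grid_ratio (n : nat) : R := INR (n * n) / INR (pi_opt n).

Lemma pi_opt_pos n : (0 < n)%nat -> 0 < INR (pi_opt n).
Proof. by move=> n_gt0; apply/lt_0_INR/ltP; have := grid_size_le_pi_opt n; nia. Qed.

Lemma grid_ratio_le9 n : (0 < n)%nat -> grid_ratio n <= 9.
Proof.
move=> n_gt0; have P_pos := pi_opt_pos n_gt0.
have /leP/le_INR := grid_size_le_pi_opt n.
rewrite /grid_ratio -multE !mult_INR (_ : INR 9 = 9); last by simpl; lra.
move=> le; apply: (Rmult_le_reg_r (INR (pi_opt n))) => //.
by rewrite /Rdiv Rmult_assoc Rinv_l; lra.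
Qed.

Lemma grid_ratio_drift n m : (0 < n)%nat -> (n <= m)%nat ->
  grid_ratio n - 27 * INR n / INR m <= grid_ratio m.
Proof.
move=> n_gt0 le_nm.
have m_gt0 : (0 < m)%nat by apply: leq_trans le_nm.
have P_pos := pi_opt_pos n_gt0; have Q_pos := pi_opt_pos m_gt0.
have m_pos : 0 < INR m by apply/lt_0_INR/ltP.
have /leP/le_INR := pi_opt_drift n_gt0 le_nm.
rewrite /grid_ratio -!multE -plusE !plus_INR !mult_INR (_ : INR 27 = 27); last by simpl; lra.
set P := INR (pi_opt n) in P_pos *; set Q := INR (pi_opt m) in Q_pos *.
set x := INR n; set y := INR m in m_pos * => le.
apply: (Rmult_le_reg_r (P * Q * y)); first by repeat apply: Rmult_lt_0_compat.
have -> : (x * x / P - 27 * x / y) * (P * Q * y) = x * x * y * Q - 27 * x * P * Q.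
  by field; lra.
have -> : y * y / Q * (P * Q * y) = y * y * y * P by field; lra.
lra.
Qed.

Theorem mainTheorem1 :
  exists l : R, Un_cv (fun n : nat => INR (n * n)%nat / INR (pi_opt n)) l.
Proof.
apply: (@Un_cv_of_bounded_almost_increasing grid_ratio 9 27); first lra.
  exact: grid_ratio_le9.
exact: grid_ratio_drift.
Qed.
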